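(* Let $\Sigma$ be a flag complex on the vertex set $[n]$ and let $\ell$ be a positive integer. Let $\Delta$ and $\Delta'$ be the simplicial complexes (collections of subsets of $[n]$ closed under taking subsets) whose Stanley–Reisner ideals are $I_\Delta=I(\overline{\mathrm{skel}_\Sigma(\ell)})$ and $I_{\Delta'}=I(\overline{\mathrm{skel}_\Sigma(1)})$. Then $\Delta^\vee=\mathrm{skel}_{(\Delta')^\vee}(n-\ell-2)$.
   Context: $S=K[x_1,\ldots,x_n]$, $x_F=\prod_{i\in F}x_i$. For a simplicial complex $\Gamma$, the Stanley–Reisner ideal $I_\Gamma$ is generated by all $x_F$ with $F\notin\Gamma$, and the facet ideal $I(\Gamma)$ is generated by the $x_F$ with $F$ a facet (maximal face) of $\Gamma$. $\Sigma$ is flag if all its minimal nonfaces have exactly two elements (the full simplex is also considered flag). $\mathrm{skel}_\Gamma(i)$ is the complex whose facets are the $i$-dimensional faces of $\Gamma$ (dimension of $F$ is $|F|-1$). For $k\ge1$, $\overline{\mathrm{skel}_\Sigma(k)}$ is the complex whose facets are the $(k+1)$-element subsets of $[n]$ not belonging to $\Sigma$; thus $I(\overline{\mathrm{skel}_\Sigma(k)})$ is generated by $x_F$ for $F\subseteq[n]$, $|F|=k+1$, $F\notin\Sigma$. The Alexander dual is $\Gamma^\vee=\{[n]\setminus F: F\subseteq[n],\ F\notin\Gamma\}$. *)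

From HB Require Import structures.
From mathcomp Require Import all_boot all_order all_algebra.
Set Implicit Arguments. Unset Strict Implicit. Unset Printing Implicit Defensive.
Import GRing.Theory Num.Theory.

Section Defs.
Variable T : finType.

Definition is_complex (K : {set {set T}}) : Prop :=
  forall A B : {set T}, B \subset A -> A \in K -> B \in K.

Definition min_nonface (K : {set {set T}}) (F : {set T}) : Prop :=
  F \notin K /\ (forall G : {set T}, G \proper F -> G \in K).

Definition flag (K : {set {set T}}) : Prop :=
  forall F : {set T}, min_nonface K F -> #|F| = 2.

(* A squarefree monomial ideal generated by the monomials x_F (F in S) is
   encoded by the set of supports A of the squarefree monomials x_A it
   contains: x_A lies in the ideal iff x_F divides x_A for some F in S.
   Two ideals generated by squarefree monomials are equal iff they contain the
   same squarefree monomials. *)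
Definition mono_ideal (S : {set {set T}}) : {set {set T}} :=
  [set A : {set T} | [exists F in S, F \subset A]].

Definition SR_ideal (K : {set {set T}}) : {set {set T}} :=
  mono_ideal [set F : {set T} | F \notin K].

Definition facets (K : {set {set T}}) : {set {set T}} :=
  [set F in K | [forall G in K, (F \subset G) ==> (G == F)]].

Definition facet_ideal (K : {set {set T}}) : {set {set T}} :=
  mono_ideal (facets K).

(* skel_K(i): the complex whose facets are the i-dimensional faces of K
   (dimension of F is |F|-1); i is an integer *)
Definition skel (K : {set {set T}}) (i : int) : {set {set T}} :=
  [set A : {set T} | [exists F in K, ((#|F|%:Z == i + 1)%R && (A \subset F))]].

(* \overline{skel_S(k)}: the complex whose facets are the (k+1)-subsets
   of the ground set not belonging to S *)
Definition cskel (S : {set {set T}}) (k : nat) : {set {set T}} :=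
  [set A : {set T} | [exists F : {set T}, [&& #|F| == k.+1, F \notin S & A \subset F]]].

Definition alex_dual (K : {set {set T}}) : {set {set T}} :=
  [set ~: F | F in [set F : {set T} | F \notin K]].

End Defs.

(* If Sigma is flag, the complex Delta' cut out by the missing edges of Sigma
   is Sigma itself, while Delta consists of the sets containing no
   (l+1)-subset outside Sigma.  Hence the complements of the non-faces of
   Delta are exactly the subsets of the complements of the (l+1)-element
   non-faces of Sigma; these complements have n-l-1 elements, and they are the
   (n-l-2)-dimensional faces of the Alexander dual of Sigma. *)
From mathcomp Require Import all_boot all_order all_algebra.
From mathcomp Require Import zify.
Import GRing.Theory Num.Theory.

Section Complexes.
Context {T : finType}.
Implicit Types (K S : {set {set T}}) (A F : {set T}).

Definition nonfaces_of_card S (k : nat) : {set {set T}} :=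
  [set F : {set T} | (#|F| == k) && (F \notin S)].

Lemma SR_idealE K : is_complex K -> SR_ideal K = ~: K.
Proof.
move=> cK; apply/setP => A; rewrite !inE; apply/existsP/idP.
- by case=> F /andP[]; rewrite inE => FK FA; apply: contra FK; apply: cK.
- by move=> AK; exists A; rewrite inE AK subxx.
Qed.

Lemma facets_cskel S k : facets (cskel S k) = nonfaces_of_card S k.+1.
Proof.
have nonface_in_cskel F : #|F| == k.+1 -> F \notin S -> F \in cskel S k.
  by move=> cF FS; rewrite inE; apply/existsP; exists F; rewrite cF FS subxx.
apply/setP => F; rewrite !inE; apply/andP/andP.
- case=> /existsP[H /and3P[cH HS FH]] /forallP /(_ H).
  by rewrite nonface_in_cskel //= FH => /eqP <-.
- case=> cF FS; split; first by move: (nonface_in_cskel F cF FS); rewrite inE.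
  apply/forallP => G; rewrite inE; apply/implyP => /existsP[H /and3P[cH _ GH]].
  apply/implyP => FG; rewrite eq_sym eqEcard FG.
  by rewrite (eqP cF) -(eqP cH) subset_leq_card.
Qed.

Lemma complex_of_SR_facet_cskel K S k : is_complex K ->
  SR_ideal K = facet_ideal (cskel S k) ->
  K = ~: mono_ideal (nonfaces_of_card S k.+1).
Proof.
by move=> cK EK; rewrite -facets_cskel -[K]setCK -(SR_idealE _ cK) EK.
Qed.

Lemma min_nonface_sub S F : F \notin S ->
  exists2 E, min_nonface S E & E \subset F.
Proof.
move=> FS; pose P (E : {set T}) := (E \subset F) && (E \notin S).
have PF : P F by rewrite /P subxx FS.
case: (@arg_minnP _ F P (fun E => #|E|) PF) => E /andP[EF ES] Emin.
exists E => //; split => // G GE; apply/negPn/negP => GS.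
have := Emin G; rewrite /P (subset_trans (proper_sub GE) EF) GS => /(_ isT).
by rewrite leqNgt proper_card.
Qed.

(* A flag complex is the clique complex of its graph. *)
Lemma flag_complexE S : is_complex S -> flag S ->
  ~: mono_ideal (nonfaces_of_card S 2) = S.
Proof.
move=> cS fS; apply/setP => A; rewrite !inE; apply/idP/idP.
- apply: contraR => /min_nonface_sub[E minE EA].
  by apply/existsP; exists E; rewrite !inE EA fS // (proj1 minE).
- move=> AS; apply/existsP => -[F]; rewrite !inE => /andP[/andP[_ FS] FA].
  by move: FS; rewrite (cS A F FA AS).
Qed.

Lemma mem_alex_dual K A : (A \in alex_dual K) = (~: A \notin K).
Proof.
apply/imsetP/idP.
- by case=> F; rewrite inE => FK ->; rewrite setCK.
- by move=> AK; exists (~: A); rewrite ?inE ?setCK.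
Qed.

Lemma alex_dual_compl_mono_ideal S :
  alex_dual (~: mono_ideal S) = [set A : {set T} | [exists F in S, A \subset ~: F]].
Proof.
apply/setP => A; rewrite mem_alex_dual !inE negbK.
by apply: eq_existsb => F; rewrite subsetC.
Qed.

End Complexes.

Lemma skel_alex_dual n (S : {set {set 'I_n}}) k :
  skel (alex_dual S) (n%:Z - k%:Z - 1)%R =
  [set A : {set 'I_n} | [exists F in nonfaces_of_card S k, A \subset ~: F]].
Proof.
have cardC (X : {set 'I_n}) : #|~: X| = (n - #|X|)%N.
  by rewrite cardsCs card_ord setCK.
have cardX (X : {set 'I_n}) : (#|X| <= n)%N.
  by apply: leq_trans (max_card X) _; rewrite card_ord.
apply/setP => A; rewrite !inE; apply/existsP/existsP.
- case=> G /and3P[]; rewrite mem_alex_dual => GS cG AG.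
  exists (~: G); rewrite !inE setCK GS AG andbT.
  by have := cardX G; move: cG; rewrite cardC => /eqP; lia.
- case=> F; rewrite !inE => /andP[/andP[cF FS] AF].
  exists (~: F); rewrite mem_alex_dual setCK FS AF cardC.
  by have := cardX F; move: cF => /eqP; lia.
Qed.

Theorem proposition1p3 (n l : nat) (Sigma Delta Delta' : {set {set 'I_n}}) :
  is_complex Sigma -> flag Sigma -> (0 < l)%N ->
  is_complex Delta -> is_complex Delta' ->
  SR_ideal Delta = facet_ideal (cskel Sigma l) ->
  SR_ideal Delta' = facet_ideal (cskel Sigma 1) ->
  alex_dual Delta = skel (alex_dual Delta') (n%:Z - l%:Z - 2)%R.
Proof.
move=> cS fS _ cD cD' ED ED'.
rewrite (complex_of_SR_facet_cskel _ _ _ cD ED)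
  (complex_of_SR_facet_cskel _ _ _ cD' ED').
rewrite flag_complexE // alex_dual_compl_mono_ideal.
have -> : (n%:Z - l%:Z - 2 = n%:Z - l.+1%:Z - 1)%R by lia.
by rewrite skel_alex_dual.
Qed.
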